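(* Let $n$ be an even perfect square. Then $D_{S(n)^*}=C_{S(n)^*}=4$.
   Context: For a natural number $n$, $\mathbb Z_n=\mathbb Z/n\mathbb Z$, $S(n)=\{x^2:x\in\mathbb Z_n\}$, $S(n)^*=S(n)\setminus\{0\}$. For $A\subseteq\mathbb Z_n$, a sequence $(y_1,\dots,y_t)$ ($t\ge1$) in $\mathbb Z_n$ is an $A$-weighted zero-sum sequence if there exist $a_1,\dots,a_t\in A$ with $\sum a_iy_i=0$; a sequence has an $A$-weighted zero-sum subsequence if some nonempty subsequence is an $A$-weighted zero-sum sequence. $D_A(n)$ is the least positive integer $t$ such that every sequence of length $t$ in $\mathbb Z_n$ has an $A$-weighted zero-sum subsequence; $C_A(n)$ is the least positive integer $t$ such that every sequence of length $t$ in $\mathbb Z_n$ has an $A$-weighted zero-sum subsequence consisting of consecutive terms. $D_{S(n)^*}=D_{S(n)^*}(n)$, $C_{S(n)^*}=C_{S(n)^*}(n)$. *)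

(* Z_n is modelled as residues 'I_n with arithmetic mod n. *)
From mathcomp Require Import all_boot.
Set Implicit Arguments. Unset Strict Implicit. Unset Printing Implicit Defensive.

Definition Ssq (n : nat) : pred nat :=
  fun a => (a < n) && [exists x : 'I_n, (x * x) %% n == a].

Definition Ssq_star (n : nat) : pred nat := fun a => Ssq n a && (a != 0).

Definition weighted_zero_sum (n : nat) (A : pred nat) (t : nat)
    (y : 'I_t -> 'I_n) (I : {set 'I_t}) : Prop :=
  exists a : 'I_t -> nat,
    (forall i, i \in I -> A (a i)) /\
    (\sum_(i in I) a i * y i) %% n = 0.

Definition D_prop (n : nat) (A : pred nat) (t : nat) : Prop :=
  forall y : 'I_t -> 'I_n,
    exists I : {set 'I_t}, I != set0 /\ weighted_zero_sum A y I.

Definition C_prop (n : nat) (A : pred nat) (t : nat) : Prop :=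
  forall y : 'I_t -> 'I_n,
    exists l r : nat, l < r <= t /\
      weighted_zero_sum A y [set i : 'I_t | l <= i < r].

Definition is_least_pos (P : nat -> Prop) (m : nat) : Prop :=
  0 < m /\ P m /\ (forall t, 0 < t -> t < m -> ~ P t).

Definition D_eq (n : nat) (A : pred nat) (m : nat) := is_least_pos (D_prop n A) m.
Definition C_eq (n : nat) (A : pred nat) (m : nat) := is_least_pos (C_prop n A) m.

From mathcomp Require Import all_boot zify.
Set Implicit Arguments. Unset Strict Implicit. Unset Printing Implicit Defensive.

(* Upper bound: for n = (2m)^2 give every term the weight m^2.  Among four
   terms some consecutive block has sum divisible by 4 (pigeonhole on the
   prefix sums mod 4), so its weighted sum vanishes mod 4 m^2 = n.
   Lower bound: for n = k^2 pick, by the Chinese remainder theorem, u and w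
   congruent to 1 mod 4 such that for every odd prime p | k, -u is a quadratic
   non-residue mod p and p divides w exactly once.  Then
   x0^2 + u x1^2 + w x2^2 = 0 (mod k^2) forces k | x0, x1, x2 (descent at each
   prime, using squares mod 4 at p = 2), so (1, u, w) has no zero-sum
   subsequence with nonzero square weights. *)

Definition form3 (u w x0 x1 x2 : nat) := x0 ^ 2 + x1 ^ 2 * u + x2 ^ 2 * w.

Lemma form3_scale d u w x0 x1 x2 :
  form3 u w (x0 * d) (x1 * d) (x2 * d) = d ^ 2 * form3 u w x0 x1 x2.
Proof. rewrite /form3; nia. Qed.

Lemma sqr_mod4 x : x ^ 2 %% 4 = odd x.
Proof.
rewrite -{1}(odd_double_half x) -muln2; case: (odd x) => /=.
- by rewrite (_ : _ ^ 2 = (x./2 + x./2 ^ 2) * 4 + 1) ?modnMDl //; nia.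
- by rewrite (_ : _ ^ 2 = x./2 ^ 2 * 4) ?modnMl //; nia.
Qed.

Lemma form3_mod4 u w x0 x1 x2 : u %% 4 = 1 -> w %% 4 = 1 ->
  form3 u w x0 x1 x2 = odd x0 + odd x1 + odd x2 %[mod 4].
Proof.
move=> hu hw; rewrite /form3 -modnDm -(modnDm (x0 ^ 2)) -(modnMm (x1 ^ 2)).
rewrite -(modnMm (x2 ^ 2)) hu hw !muln1 !modn_mod !sqr_mod4.
by rewrite modnDml.
Qed.

Lemma form3_2adic e u w x0 x1 x2 : u %% 4 = 1 -> w %% 4 = 1 ->
  (2 ^ e) ^ 2 %| form3 u w x0 x1 x2 -> [/\ 2 ^ e %| x0, 2 ^ e %| x1 & 2 ^ e %| x2].
Proof.
move=> hu hw; elim: e x0 x1 x2 => [|e IH] x0 x1 x2 hd; first by rewrite !dvd1n.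
have : (odd x0 + odd x1 + odd x2) %% 4 = 0.
  rewrite -(form3_mod4 _ _ _ hu hw); apply/eqP; apply: dvdn_trans hd.
  by rewrite (expnSr 2 e) expnMn dvdn_mull.
case: (boolP (odd x0)) (boolP (odd x1)) (boolP (odd x2)) => [] o0 [] o1 [] o2 // _.
move: o0 o1 o2 hd; rewrite -!dvdn2 => /dvdnP[z0 ->] /dvdnP[z1 ->] /dvdnP[z2 ->].
rewrite form3_scale (expnSr 2 e) expnMn mulnC dvdn_pmul2l // => /IH[d0 d1 d2].
by rewrite !dvdn_pmul2r.
Qed.

(* For a prime p: -u is a quadratic non-residue mod p. *)
Definition anisotropic (p u : nat) := forall x z, p %| x ^ 2 + u * z ^ 2 -> p %| z.

Definition admissible_at (p u w : nat) := [/\ anisotropic p u, p %| w & ~~ (p ^ 2 %| w)].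

Lemma form3_dvd_prime p u w x0 x1 x2 : prime p -> admissible_at p u w ->
  p ^ 2 %| form3 u w x0 x1 x2 -> [/\ p %| x0, p %| x1 & p %| x2].
Proof.
move=> pr [hu /dvdnP[w' ->{w}] hw'] hd; have p0 := prime_gt0 pr.
have {hw'} pw' : ~~ (p %| w') by rewrite -mulnn dvdn_pmul2r in hw'.
have hp : p %| form3 u (w' * p) x0 x1 x2 by apply: dvdn_trans hd; rewrite dvdn_exp.
have d1 : p %| x1.
  apply: (hu x0); move: hp; rewrite /form3 mulnA (mulnC _ u) dvdn_addl //.
  exact: dvdn_mull.
have d0 : p %| x0.
  suff : p %| x0 ^ 2 by rewrite Euclid_dvdX // => /andP[].
  move: hp; case/dvdnP: (d1) => z1 ->; rewrite /form3 -addnA dvdn_addl //.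
  by apply: dvdn_add; [apply/dvdn_mulr/dvdn_exp/dvdn_mull | apply/dvdn_mull/dvdn_mull].
have : p ^ 2 %| x2 ^ 2 * w' * p.
  case/dvdnP: d0 => z0 e0; case/dvdnP: d1 => z1 e1.
  rewrite -mulnA -(dvdn_addr _ (_ : p ^ 2 %| (z0 * p) ^ 2 + (z1 * p) ^ 2 * u)).
    by rewrite -e0 -e1.
  by rewrite !expnMn; apply: dvdn_add; [apply/dvdn_mull | apply/dvdn_mulr/dvdn_mull].
by rewrite -mulnn dvdn_pmul2r // Euclid_dvdM // (negbTE pw') orbF Euclid_dvdX // => /andP[].
Qed.

Lemma form3_padic p f u w x0 x1 x2 : prime p -> admissible_at p u w ->
  (p ^ f) ^ 2 %| form3 u w x0 x1 x2 -> [/\ p ^ f %| x0, p ^ f %| x1 & p ^ f %| x2].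
Proof.
move=> pr adm; have p0 := prime_gt0 pr.
elim: f x0 x1 x2 => [|f IH] x0 x1 x2 hd; first by rewrite !dvd1n.
have hp : p ^ 2 %| form3 u w x0 x1 x2.
  by apply: dvdn_trans hd; rewrite (expnSr p f) expnMn dvdn_mull.
case: (form3_dvd_prime pr adm hp) hd => /dvdnP[z0 ->] /dvdnP[z1 ->] /dvdnP[z2 ->].
rewrite form3_scale (expnSr p f) expnMn mulnC dvdn_pmul2l ?expn_gt0 ?p0 // => /IH[d0 d1 d2].
by rewrite !dvdn_pmul2r.
Qed.

Definition admissible (ps : seq nat) (u w : nat) :=
  [/\ u %% 4 = 1, w %% 4 = 1 & forall p, p \in ps -> p != 2 -> admissible_at p u w].

Lemma form3_dvd k u w x0 x1 x2 : 0 < k -> admissible (primes k) u w ->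
  k ^ 2 %| form3 u w x0 x1 x2 -> [/\ k %| x0, k %| x1 & k %| x2].
Proof.
move=> k0 [hu hw hodd] hd.
have local p : p \in primes k -> [/\ k`_p %| x0, k`_p %| x1 & k`_p %| x2].
  move=> pk; have pr : prime p by move: pk; rewrite mem_primes => /andP[].
  have {}hd : (p ^ logn p k) ^ 2 %| form3 u w x0 x1 x2.
    by apply: dvdn_trans hd; rewrite dvdn_exp2r // -p_part dvdn_part.
  rewrite p_part; have [p2 | p2] := eqVneq p 2.
    by rewrite p2 in hd *; exact: form3_2adic hd.
  exact: form3_padic pr (hodd p pk p2) hd.
by split; apply/dvdn_partP => // p pk; case: (local p pk).
Qed.

Lemma exists_nonsquare_mod p : prime p -> p != 2 ->
  exists2 v, v < p & forall t, t ^ 2 %% p != v.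
Proof.
move=> pr p2; have p0 := prime_gt0 pr; have p1 := prime_gt1 pr.
pose sq (t : 'I_p) : 'I_p := Ordinal (ltn_pmod (t ^ 2) p0).
(* squaring identifies 1 and p - 1, so it is not onto *)
have [v nv] : exists v, v \notin codom sq.
  apply/existsP; apply: contraT; rewrite negb_exists => /forallP onto.
  have /image_injP inj : #|codom sq| == #|'I_p|.
    rewrite eqn_leq leq_image_card /=; apply/subset_leq_card/subsetP => v _.
    by have := onto v; rewrite negbK.
  have pm1 : p.-1 < p by rewrite prednK.
  have /(congr1 val)/= : Ordinal p1 = Ordinal pm1.
    apply: inj; rewrite ?inE //; apply: val_inj => /=.
    by rewrite modn_small // (_ : p.-1 ^ 2 = (p - 2) * p + 1) ?modnMDl ?modn_small //; nia.
  by move=> e1; move: p2; rewrite -(prednK p0) -e1.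
exists v => // t; apply: contra nv => /eqP sqt.
apply/codomP; exists (Ordinal (ltn_pmod t p0)); apply: val_inj.
by rewrite /= modnXm.
Qed.

Lemma exists_anisotropic p : prime p -> p != 2 -> exists u, anisotropic p u.
Proof.
move=> pr p2; have p0 := prime_gt0 pr.
have [v vp nsq] := exists_nonsquare_mod pr p2.
exists (p - v) => x z hd; apply: contraT => pz.
have [a _] := Bezoutl z p0; rewrite (eqP (_ : coprime p z)) ?prime_coprime //.
(* a * z = -1 (mod p), hence (a * x) ^ 2 = v (mod p) *)
case eaz: (a * z) => [|s] /dvdnP[m em].
  by move/esym/eqP: em; rewrite muln_eq1 => /andP[_ /eqP p1]; rewrite p1 in pr.
have : p %| (a * x) ^ 2 + (p - v).
  have e : a ^ 2 * (x ^ 2 + (p - v) * z ^ 2) = (a * x) ^ 2 + (p - v) + (p - v) * s * (m * p).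
    by rewrite -em; nia.
  by move: (dvdn_mull (a ^ 2) hd); rewrite e dvdn_addl //; apply/dvdn_mull/dvdn_mull.
case/dvdnP=> r er; have := nsq (a * x); suff -> : (a * x) ^ 2 %% p = v by rewrite eqxx.
have : (a * x) ^ 2 + p = r * p + v by lia.
by move/(congr1 (modn^~ p)); rewrite modnDr modnMDl (modn_small vp).
Qed.

Lemma dvdn_eq_mod d m a b : d %| m -> a = b %[mod m] -> (d %| a) = (d %| b).
Proof. by move=> dm e; rewrite /dvdn -(modn_dvdm a dm) e (modn_dvdm b dm). Qed.

Lemma anisotropic_eq_mod p u u' : u = u' %[mod p] -> anisotropic p u' -> anisotropic p u.
Proof.
move=> e hu' x z; rewrite (@dvdn_eq_mod _ p _ (x ^ 2 + u' * z ^ 2)) //; first exact: hu'.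
by rewrite -modnDmr -modnMml e modnMml modnDmr.
Qed.

Lemma exists_admissible ps : uniq ps -> all prime ps -> exists u w, admissible ps u w.
Proof.
elim: ps => [|p ps IH] /=; first by exists 1, 1.
case/andP=> pps uniq_ps /andP[pr prime_ps].
have [u' [w' [hu' hw' adm']]] := IH uniq_ps prime_ps.
have [p2|p2] := eqVneq p 2.
  by exists u', w'; split => // q; rewrite inE => /predU1P[-> /eqP|]; last exact: adm'.
have [up hup] := exists_anisotropic pr p2.
pose M := 4 * \prod_(q <- ps) q ^ 2.
have coprime_pM : coprime (p ^ 2) M.
  rewrite coprime_pexpl // coprimeMr (_ : 4 = 2 ^ 2) // coprime_pexpr //.
  rewrite !prime_coprime // Euclid_dvd_prod // dvdn_prime2 // p2 /= big_has.
  apply/hasPn => q qps; rewrite Euclid_dvdX // andbT (dvdn_prime2 pr (allP prime_ps q qps)).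
  by apply: contraNneq pps => ->.
have dvd_qM : forall q, q \in ps -> q ^ 2 %| M.
  by move=> q qps; rewrite /M (big_rem q qps) /= mulnCA dvdn_mulr.
have dvd_4M : 4 %| M by rewrite dvdn_mulr.
have pp2 : p %| p ^ 2 by rewrite dvdn_exp.
pose u := chinese (p ^ 2) M up u'; pose w := chinese (p ^ 2) M p w'.
have eu1 : u = up %[mod p ^ 2] by apply: chinese_modl.
have eu2 : u = u' %[mod M] by apply: chinese_modr.
have ew1 : w = p %[mod p ^ 2] by apply: chinese_modl.
have ew2 : w = w' %[mod M] by apply: chinese_modr.
exists u, w; split.
- by rewrite -(modn_dvdm u dvd_4M) eu2 modn_dvdm.
- by rewrite -(modn_dvdm w dvd_4M) ew2 modn_dvdm.
move=> q; rewrite inE => /predU1P[-> _ | qps q2].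
  split.
  - by apply: anisotropic_eq_mod hup; rewrite -(modn_dvdm u pp2) eu1 modn_dvdm.
  - by rewrite (dvdn_eq_mod pp2 ew1).
  - by rewrite (dvdn_eq_mod (dvdnn _) ew1) -{2}(expn1 p) dvdn_Pexp2l ?(prime_gt1 pr).
have [aniso_u' dvd_w' ndvd_w'] := adm' q qps q2.
have qM : q %| M by apply: dvdn_trans (dvd_qM q qps); rewrite dvdn_exp.
split.
- by apply: anisotropic_eq_mod aniso_u'; rewrite -(modn_dvdm u qM) eu2 modn_dvdm.
- by rewrite (dvdn_eq_mod qM ew2).
- by rewrite (dvdn_eq_mod (dvd_qM q qps) ew2).
Qed.

Lemma exists_consecutive_sum_dvdn m (c : nat -> nat) : 0 < m ->
  exists l r, l < r <= m /\ m %| \sum_(l <= i < r) c i.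
Proof.
move=> m0; pose S (j : 'I_m.+1) : 'I_m := Ordinal (ltn_pmod (\sum_(0 <= i < j) c i) m0).
have /injectivePn[j1 [j2 ne12 eS]] : ~~ injectiveb S.
  by apply/injectiveP => /leq_card; rewrite !card_ord ltnn.
wlog lt12 : j1 j2 ne12 eS / j1 < j2.
  move=> IH; case: (ltngtP j1 j2) => [||/val_inj e12]; first exact: IH.
    by apply: IH; rewrite 1?eq_sym.
  by rewrite e12 eqxx in ne12.
exists j1, j2; rewrite lt12 -ltnS ltn_ord; split => //.
have /(congr1 val)/= := eS; rewrite (@big_cat_nat _ _ _ j1 0 j2) ?(ltnW lt12) //=.
by move/eqP; rewrite -[X in X %% m == _]addn0 eqn_modDl mod0n eq_sym.
Qed.

Lemma C_prop_D_prop n (A : pred nat) t : C_prop n A t -> D_prop n A t.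
Proof.
move=> hC y; have [l [r [/andP[lr rt] hw]]] := hC y.
exists [set i : 'I_t | l <= i < r]; split => //; apply/set0Pn.
by exists (Ordinal (leq_trans lr rt)); rewrite inE /= leqnn lr.
Qed.

Lemma D_propS n (A : pred nat) t : D_prop n A t -> D_prop n A t.+1.
Proof.
move=> hD y; have [I [/set0Pn[i0 Ii0] [a [ha hs]]]] := hD (fun i => y (lift ord_max i)).
exists [set lift ord_max i | i in I]; split.
  by apply/set0Pn; exists (lift ord_max i0); apply: imset_f.
exists (fun i => oapp a 0 (unlift ord_max i)); split.
  by move=> i /imsetP[j Ij ->]; rewrite liftK; apply: ha.
rewrite big_imset /=; last by move=> i j _ _; apply: lift_inj.
by rewrite -[RHS]hs; congr (_ %% _); apply: eq_bigr => i _; rewrite liftK.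
Qed.

Lemma C_prop_Ssq_star_4 m : 0 < m -> C_prop ((2 * m) ^ 2) (Ssq_star ((2 * m) ^ 2)) 4.
Proof.
move=> m0 y; set n := (2 * m) ^ 2.
have [l [r [/andP[lr r4] dvd4]]] :=
  exists_consecutive_sum_dvdn (fun i => y (inord i)) (isT : 0 < 4).
exists l, r; split; first by rewrite lr r4.
have mn : m < n by rewrite /n; nia.
have m2n : m ^ 2 < n by rewrite /n; nia.
exists (fun _ => m ^ 2); split.
  move=> i _; rewrite /Ssq_star /Ssq -lt0n expn_gt0 m0 m2n andbT.
  by apply/existsP; exists (Ordinal mn); rewrite /= mulnn modn_small.
apply/eqP; rewrite -/(dvdn _ _) -big_distrr (@dvdn_trans (m ^ 2 * 4)) //.
  by rewrite /n expnMn mulnC.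
apply: dvdn_mul => //; move: dvd4; rewrite (big_nat_widen _ _ _ _ _ r4) big_geq_mkord.
congr (is_true (_ %| _)); apply: eq_big => [i | i _]; first by rewrite inE andbC.
by rewrite inord_val.
Qed.

Lemma weighted_zero_sum_Ssq_star n t (y : 'I_t -> 'I_n) (I : {set 'I_t}) :
  weighted_zero_sum (Ssq_star n) y I ->
  exists x : 'I_t -> nat, (forall i, i \in I -> x i ^ 2 %% n != 0) /\
    (\sum_(i < t) x i ^ 2 * y i) %% n = 0.
Proof.
case=> a [ha hs].
have /fin_all_exists[x hx] i : exists x, i \in I -> x ^ 2 %% n = a i.
  case: (boolP (i \in I)) => [/ha/andP[/andP[_ /existsP[x /eqP <-]] _] | _]; last by exists 0.
  by exists x; rewrite mulnn.
exists (fun i => if i \in I then x i else 0); split.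
  by move=> i Ii; rewrite Ii hx //; case/andP: (ha i Ii).
rewrite -[RHS]hs -[LHS]modn_summ [in RHS]big_mkcond -[RHS]modn_summ; congr (_ %% _).
apply: eq_bigr => i _; case: ifP => Ii; last by rewrite mul0n mod0n.
by rewrite -modnMml hx // modnMml.
Qed.

Lemma not_D_prop_Ssq_star_3 k : 0 < k -> ~ D_prop (k ^ 2) (Ssq_star (k ^ 2)) 3.
Proof.
move=> k0 hD; set n := k ^ 2; have n0 : 0 < n by rewrite expn_gt0 k0.
have [u [w adm]] := exists_admissible (primes_uniq k) (all_prime_primes k).
have [I [/set0Pn[i Ii] /weighted_zero_sum_Ssq_star[x [hx hsum]]]] :=
  hD (fun i => Ordinal (ltn_pmod (nth 0 [:: 1; u; w] i) n0)).
have : k ^ 2 %| form3 u w (x ord0) (x (lift ord0 ord0)) (x (lift ord0 (lift ord0 ord0))).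
  apply/eqP; rewrite -[RHS]hsum -[RHS]modn_summ.
  under eq_bigr => j _ do rewrite /= modnMmr.
  by rewrite modn_summ !big_ord_recl big_ord0 /form3 /= addn0 muln1 addnA.
case/(form3_dvd k0 adm) => d0 d1 d2.
have dvd_x : k %| x i.
  by case: i Ii => -[|[|[|//]]] Hi _; [move: d0 | move: d1 | move: d2];
    congr (is_true (_ %| x _)); apply: val_inj.
by move: (hx i Ii); rewrite /n -/(dvdn _ _) dvdn_exp2r.
Qed.

Theorem mainTheorem9 (n : nat) :
  0 < n -> ~~ odd n -> (exists k : nat, n = k ^ 2) ->
  D_eq n (Ssq_star n) 4 /\ C_eq n (Ssq_star n) 4.
Proof.
move=> n0 even_n [k ek]; subst n.
have k0 : 0 < k by rewrite expn_gt0 orbF in n0.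
have /dvdnP[m em] : 2 %| k by rewrite dvdn2; rewrite oddX in even_n.
have m0 : 0 < m by move: k0; rewrite em muln_gt0 => /andP[].
have C4 : C_prop (k ^ 2) (Ssq_star (k ^ 2)) 4 by rewrite em mulnC; exact: C_prop_Ssq_star_4.
have notD t : 0 < t -> t < 4 -> ~ D_prop (k ^ 2) (Ssq_star (k ^ 2)) t.
  move=> t0 t4 hD; apply: (not_D_prop_Ssq_star_3 k0).
  by case: t t0 t4 hD => [|[|[|[|//]]]] // _ _ => [/D_propS|] /D_propS.
split; split=> //; split.
- exact: C_prop_D_prop.
- exact: notD.
- exact: C4.
- by move=> t t0 t4 /C_prop_D_prop; apply: notD.
Qed.
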